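(* Let $X=\{0,1\}$ with the graph $0-1$ (arrows $0\to1$ and $1\to0$), $A=\mathbb{F}_2(X)$, and take $\Omega^2=\Omega^1\otimes_A\Omega^1$ (no relations, $\wedge$ the identity map). Then there is a unique bimodule connection on $\Omega^1$ with invertible generalised braiding $\sigma$, namely $\nabla(01)=\nabla(10)=g$, $\sigma=\mathrm{id}$. This is also the unique metric compatible bimodule connection, and it has $T_\nabla=0$ (so it is a QLC) and $R_\nabla=0$.
   Context: Notation: $ij$ denotes the arrow $i\to j$ and $i_0i_1\cdots i_m$ the path $i_0\to i_1\to\cdots\to i_m$; $\Omega^1$ is the $\mathbb{F}_2$-vector space with basis the arrows, with bimodule structure $f\cdot(x\to y)\cdot h=f(x)h(y)\,(x\to y)$ and ${\rm d} f=\sum_{x\to y}(f(y)+f(x))\,x\to y$. Tensor powers $\Omega^1\otimes_A\cdots\otimes_A\Omega^1$ have basis the paths of the corresponding length, a path corresponding to the tensor product of its steps (tensor products of non-composable steps are zero). Let $\theta=01+10$; the differential on 1-forms is ${\rm d}\omega=\theta\otimes\omega+\omega\otimes\theta$. The quantum metric is $g=010+101$. A bimodule connection is a linear map $\nabla:\Omega^1\to\Omega^1\otimes_A\Omega^1$ with $\nabla(f\omega)={\rm d} f\otimes\omega+f\nabla\omega$ and $\nabla(\omega f)=(\nabla\omega)f+\sigma(\omega\otimes{\rm d} f)$ for some bimodule map $\sigma:\Omega^1\otimes_A\Omega^1\to\Omega^1\otimes_A\Omega^1$. It is metric compatible if $(\nabla\otimes\mathrm{id}+(\sigma\otimes\mathrm{id})(\mathrm{id}\otimes\nabla))g=0$.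 Torsion $T_\nabla=\wedge\nabla-{\rm d}$ and curvature $R_\nabla=({\rm d}\otimes\mathrm{id}-(\wedge\otimes\mathrm{id})(\mathrm{id}\otimes\nabla))\nabla:\Omega^1\to\Omega^2\otimes_A\Omega^1$ (signs irrelevant over $\mathbb{F}_2$). A QLC is a torsion free, metric compatible bimodule connection. *)

From HB Require Import structures.
From mathcomp Require Import all_boot all_order all_algebra.
Set Implicit Arguments. Unset Strict Implicit. Unset Printing Implicit Defensive.
Import GRing.Theory.
Local Open Scope ring_scope.

Definition X := 'I_2.
Definition v0 : X := @ord0 1.
Definition v1 : X := @ord_max 1.

Definition arr := {p : X * X | p.1 != p.2}.
Definition path2 := {t : X * X * X | (t.1.1 != t.1.2) && (t.1.2 != t.2)}.
Definition path3 :=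
  {t : X * X * X * X | [&& t.1.1.1 != t.1.1.2, t.1.1.2 != t.1.2 & t.1.2 != t.2]}.

(* algebra of functions, and forms: F_2-valued coefficient functions on paths.
   Omega2 = Omega1 (x)_A Omega1 (no relations, wedge = id),
   Omega3 = Omega2 (x)_A Omega1 = Omega1 (x)_A Omega2. *)
Definition A := {ffun X -> 'F_2}.
Definition Omega1 := {ffun arr -> 'F_2}.
Definition Omega2 := {ffun path2 -> 'F_2}.
Definition Omega3 := {ffun path3 -> 'F_2}.

Definition coef1 (w : Omega1) (x y : X) : 'F_2 :=
  if @insub _ (fun p : X * X => p.1 != p.2) arr (x, y) is Some a then w a else 0.
Definition coef2 (t : Omega2) (x y z : X) : 'F_2 :=
  if @insub _ (fun t : X * X * X => (t.1.1 != t.1.2) && (t.1.2 != t.2)) path2 (x, y, z)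
  is Some p then t p else 0.

Definition e1 (x y : X) : Omega1 := [ffun a : arr => ((val a == (x, y)) : nat)%:R].
Definition e2 (x y z : X) : Omega2 :=
  [ffun p : path2 => ((val p == (x, y, z)) : nat)%:R].

(* tensor products over A (product of coefficients along composable steps) *)
Definition tens11 (w u : Omega1) : Omega2 :=
  [ffun p : path2 => coef1 w (val p).1.1 (val p).1.2 * coef1 u (val p).1.2 (val p).2].
Definition tens21 (t : Omega2) (u : Omega1) : Omega3 :=
  [ffun q : path3 => coef2 t (val q).1.1.1 (val q).1.1.2 (val q).1.2
                     * coef1 u (val q).1.2 (val q).2].
Definition tens12 (w : Omega1) (t : Omega2) : Omega3 :=
  [ffun q : path3 => coef1 w (val q).1.1.1 (val q).1.1.2
                     * coef2 t (val q).1.1.2 (val q).1.2 (val q).2].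

Definition lact1 (f : A) (w : Omega1) : Omega1 := [ffun a : arr => f (val a).1 * w a].
Definition ract1 (w : Omega1) (f : A) : Omega1 := [ffun a : arr => w a * f (val a).2].
Definition lact2 (f : A) (t : Omega2) : Omega2 :=
  [ffun p : path2 => f (val p).1.1 * t p].
Definition ract2 (t : Omega2) (f : A) : Omega2 :=
  [ffun p : path2 => t p * f (val p).2].

Definition F2linear (I J : finType) (F : {ffun I -> 'F_2} -> {ffun J -> 'F_2}) :=
  forall (c : 'F_2) (u v : {ffun I -> 'F_2}),
    F ([ffun i => c * u i] + v) = [ffun j => c * F u j] + F v.

Definition theta : Omega1 := e1 v0 v1 + e1 v1 v0.
Definition gmet : Omega2 := e2 v0 v1 v0 + e2 v1 v0 v1.
Definition d0 (f : A) : Omega1 := [ffun a : arr => f (val a).2 + f (val a).1].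
Definition d1 (w : Omega1) : Omega2 := tens11 theta w + tens11 w theta.

Definition is_bimod_conn (nabla : Omega1 -> Omega2) (sigma : Omega2 -> Omega2) : Prop :=
  [/\ F2linear nabla,
      (forall (f : A) (w : Omega1), nabla (lact1 f w) = tens11 (d0 f) w + lact2 f (nabla w)),
      (forall (f : A) (w : Omega1),
          nabla (ract1 w f) = ract2 (nabla w) f + sigma (tens11 w (d0 f))),
      F2linear sigma &
      (forall (f : A) (t : Omega2),
          sigma (lact2 f t) = lact2 f (sigma t) /\ sigma (ract2 t f) = ract2 (sigma t) f)].

(* (sigma (x) id) on Omega2 (x)_A Omega1 = 3-paths: xyzw = (xyz) (x) (zw) *)
Definition sigma_id (sigma : Omega2 -> Omega2) (q : Omega3) : Omega3 :=
  [ffun r : path3 => \sum_(s : path3)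
      q s * tens21 (sigma (e2 (val s).1.1.1 (val s).1.1.2 (val s).1.2))
                   (e1 (val s).1.2 (val s).2) r].

(* metric compatibility: (nabla (x) id + (sigma (x) id)(id (x) nabla)) g = 0,
   computed on the expansion g = sum_p g(xyz) (xy) (x) (yz) *)
Definition metric_compatible (nabla : Omega1 -> Omega2) (sigma : Omega2 -> Omega2) : Prop :=
  \sum_(p : path2)
     [ffun r : path3 => gmet p *
        (tens21 (nabla (e1 (val p).1.1 (val p).1.2)) (e1 (val p).1.2 (val p).2)
         + sigma_id sigma (tens12 (e1 (val p).1.1 (val p).1.2)
                                  (nabla (e1 (val p).1.2 (val p).2)))) r] = 0.

(* torsion T = wedge nabla - d, wedge = id *)
Definition torsion (nabla : Omega1 -> Omega2) (w : Omega1) : Omega2 := nabla w - d1 w.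

(* curvature R = (d (x) id - (wedge (x) id)(id (x) nabla)) nabla : Omega1 -> Omega2 (x)_A Omega1,
   computed on the expansion nabla w = sum_p (nabla w)(xyz) (xy) (x) (yz) *)
Definition curvature (nabla : Omega1 -> Omega2) (w : Omega1) : Omega3 :=
  \sum_(p : path2)
     [ffun r : path3 => nabla w p *
        (tens21 (d1 (e1 (val p).1.1 (val p).1.2)) (e1 (val p).1.2 (val p).2)
         - tens12 (e1 (val p).1.1 (val p).1.2) (nabla (e1 (val p).1.2 (val p).2))) r].

(* Evaluating the two Leibniz rules on delta functions almost determines a bimodule
   connection.  For an arrow xy, delta_x xy = xy and d(delta_x) (x) xy = yxy give
   delta_y nabla(xy) = yxy, while xy delta_y = xy and xy (x) d(delta_y) = xyx give
   sigma(xyx) = nabla(xy) delta_x.  Hence nabla(xy) = sigma(xyx) + yxy, where sigma(xyx)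
   is 0 or xyx.  Invertibility of sigma rules out 0, and so does metric compatibility,
   whose coefficient at 0101 is 1 + c_0 c_1 when sigma(xyx) = c_x xyx.  Thus sigma fixes
   both 2-paths, so sigma = id and nabla(01) = nabla(10) = 010 + 101 = g; that this
   connection is metric compatible, torsion free and flat is a finite computation. *)

From Pilot Require Import Defs.
From mathcomp Require Import all_boot all_order all_algebra.
Import GRing.Theory.
Set Implicit Arguments. Unset Strict Implicit.
Local Open Scope ring_scope.

Definition a01 : arr := exist _ (v0, v1) isT.
Definition a10 : arr := exist _ (v1, v0) isT.
Definition p010 : path2 := exist _ (v0, v1, v0) isT.
Definition p101 : path2 := exist _ (v1, v0, v1) isT.
Definition q0101 : path3 := exist _ (v0, v1, v0, v1) isT.
Definition q1010 : path3 := exist _ (v1, v0, v1, v0) isT.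

Definition delta (x : X) : A := [ffun z => ((z == x) : nat)%:R].

Lemma X_cases (x : X) : x = v0 \/ x = v1.
Proof. by case: x => [[|[|m]] lt_m2]; [left | right | by []]; apply: val_inj. Qed.

Lemma F2_cases (c : 'F_2) : c = 0 \/ c = 1.
Proof. by case: c => [[|[|m]] lt_m2]; [left | right | by []]; apply: val_inj. Qed.

Lemma path2_cases (p : path2) : p = p010 \/ p = p101.
Proof.
case: p => [[[x y] z] xyz].
case: (X_cases x) => ?; case: (X_cases y) => ?; case: (X_cases z) => ?; subst => //.
- by left; apply: val_inj.
- by right; apply: val_inj.
Qed.

Lemma path3_cases (q : path3) : q = q0101 \/ q = q1010.
Proof.
case: q => [[[[x y] z] u] xyzu].
case: (X_cases x) => ?; case: (X_cases y) => ?; case: (X_cases z) => ?;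
  case: (X_cases u) => ?; subst => //.
- by left; apply: val_inj.
- by right; apply: val_inj.
Qed.

Lemma sum_path2 (V : nmodType) (F : path2 -> V) : \sum_(p : path2) F p = F p010 + F p101.
Proof.
rewrite (bigD1 p010) //=; congr (_ + _); apply: big_pred1 => p /=.
by case: (path2_cases p) => ->.
Qed.

Lemma sum_path3 (V : nmodType) (F : path3 -> V) : \sum_(q : path3) F q = F q0101 + F q1010.
Proof.
rewrite (bigD1 q0101) //=; congr (_ + _); apply: big_pred1 => q /=.
by case: (path3_cases q) => ->.
Qed.

Lemma coef1_arr (w : Omega1) (a : arr) : Defs.coef1 w (val a).1 (val a).2 = w a.
Proof.
rewrite /Defs.coef1 -surjective_pairing.
case: insubP => [b _ eq_ba | /negP[]]; last exact: (valP a).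
by congr (w _); apply: val_inj.
Qed.

Lemma coef2_path (t : Omega2) (p : path2) : coef2 t (val p).1.1 (val p).1.2 (val p).2 = t p.
Proof.
rewrite /coef2 -!surjective_pairing.
case: insubP => [q _ eq_qp | /negP[]]; last exact: (valP p).
by congr (t _); apply: val_inj.
Qed.

Lemma coef1_01 w : Defs.coef1 w v0 v1 = w a01. Proof. exact: (coef1_arr w a01). Qed.
Lemma coef1_10 w : Defs.coef1 w v1 v0 = w a10. Proof. exact: (coef1_arr w a10). Qed.
Lemma coef2_010 t : coef2 t v0 v1 v0 = t p010. Proof. exact: (coef2_path t p010). Qed.
Lemma coef2_101 t : coef2 t v1 v0 v1 = t p101. Proof. exact: (coef2_path t p101). Qed.

Ltac expand_forms :=
  rewrite /theta /gmet /d1 /d0 /tens11 /tens21 /tens12 /lact1 /ract1 /lact2 /ract2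
          /e1 /e2 /delta /torsion /curvature /metric_compatible /sigma_id;
  do 4! rewrite ?sum_path2 ?sum_path3 ?sum_ffunE ?ffunE /=
                ?coef1_01 ?coef1_10 ?coef2_010 ?coef2_101
                ?mul0r ?mulr0 ?mul1r ?mulr1 ?add0r ?addr0 ?subr0 ?subrr.

Ltac case_arrow x y :=
  case: (X_cases x) => ->; case: (X_cases y) => ->; rewrite ?eqxx // => _.

Ltac case_F2_coefs := repeat match goal with
  |- context [fun_of_fin ?f ?x] => is_var f; case: (F2_cases (fun_of_fin f x)) => ->
  end.

Definition nabla_g (w : Omega1) : Omega2 := [ffun p => (w a01 + w a10) * gmet p].

Lemma nabla_g_e1 x y : x != y -> nabla_g (e1 x y) = gmet.
Proof.
by case_arrow x y; apply/ffunP => p; case: (path2_cases p) => ->;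
  rewrite /nabla_g; expand_forms; apply/eqP.
Qed.

Lemma nabla_g_bimod_conn : is_bimod_conn nabla_g id.
Proof.
split=> // [c u v | f w | f w];
  apply/ffunP => p; case: (path2_cases p) => ->; rewrite /nabla_g; expand_forms;
  case_F2_coefs; try case: (F2_cases c) => ->; by apply/eqP.
Qed.

Lemma nabla_g_metric_compatible : metric_compatible nabla_g id.
Proof.
rewrite /metric_compatible sum_path2 /= !nabla_g_e1 //.
by apply/ffunP => q; case: (path3_cases q) => ->; expand_forms; apply/eqP.
Qed.

Lemma nabla_g_torsion_free w : torsion nabla_g w = 0.
Proof.
by apply/ffunP => p; case: (path2_cases p) => ->; rewrite /nabla_g; expand_forms;
  case_F2_coefs; apply/eqP.
Qed.

Lemma nabla_g_flat w : curvature nabla_g w = 0.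
Proof.
rewrite /curvature sum_path2 /= !nabla_g_e1 //.
by apply/ffunP => q; case: (path3_cases q) => ->; rewrite /nabla_g; expand_forms;
  case_F2_coefs; apply/eqP.
Qed.

Lemma lact1_delta_e1 x y : lact1 (delta x) (e1 x y) = e1 x y.
Proof.
apply/ffunP => -[[u v] uv]; rewrite !ffunE /= xpair_eqE.
by case: (u == x); case: (v == y); apply/eqP.
Qed.

Lemma ract1_e1_delta x y : ract1 (e1 x y) (delta y) = e1 x y.
Proof.
apply/ffunP => -[[u v] uv]; rewrite !ffunE /= xpair_eqE.
by case: (u == x); case: (v == y); apply/eqP.
Qed.

Lemma tens11_d0_delta_e1 x y : x != y -> tens11 (d0 (delta x)) (e1 x y) = e2 y x y.
Proof.
by case_arrow x y; apply/ffunP => p; case: (path2_cases p) => ->; expand_forms; apply/eqP.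
Qed.

Lemma tens11_e1_d0_delta x y : x != y -> tens11 (e1 x y) (d0 (delta y)) = e2 x y x.
Proof.
by case_arrow x y; apply/ffunP => p; case: (path2_cases p) => ->; expand_forms; apply/eqP.
Qed.

Lemma lact2_0 t : lact2 0 t = 0.
Proof. by apply/ffunP => p; rewrite !ffunE mul0r. Qed.

Lemma e2_zigzag_neq0 x y : x != y -> e2 x y x != 0.
Proof.
case_arrow x y; apply/eqP; [move/ffunP/(_ p010) | move/ffunP/(_ p101)];
  by expand_forms; move/eqP.
Qed.

Section Uniqueness.

Variables (nabla : Omega1 -> Omega2) (sigma : Omega2 -> Omega2).
Hypothesis conn : is_bimod_conn nabla sigma.

Lemma lact2_delta_nabla_e1 x y : x != y -> lact2 (delta y) (nabla (e1 x y)) = e2 y x y.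
Proof.
case: conn => _ leibniz_l _ _ _ xy.
have := leibniz_l (delta x) (e1 x y).
rewrite lact1_delta_e1 tens11_d0_delta_e1 // => ->.
move: (nabla _) => n; apply/ffunP => p.
by move: xy; case_arrow x y; case: (path2_cases p) => ->; expand_forms.
Qed.

Lemma sigma_e2_ract2 x y : x != y -> sigma (e2 x y x) = ract2 (nabla (e1 x y)) (delta x).
Proof.
case: conn => _ _ leibniz_r _ _ xy.
have := leibniz_r (delta y) (e1 x y).
rewrite ract1_e1_delta tens11_e1_d0_delta // => leibniz_xy.
have -> : sigma (e2 x y x) = nabla (e1 x y) - ract2 (nabla (e1 x y)) (delta y).
  by rewrite {1}leibniz_xy addrAC subrr add0r.
move: (nabla _) => n; apply/ffunP => p.
by move: xy; case_arrow x y; case: (path2_cases p) => ->; expand_forms.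
Qed.

Lemma nabla_e1_split x y : x != y -> nabla (e1 x y) = sigma (e2 x y x) + e2 y x y.
Proof.
move=> xy; rewrite sigma_e2_ract2 //.
have := lact2_delta_nabla_e1 xy; move: (nabla _) => n source_y.
apply/ffunP => p; move/ffunP/(_ p): source_y; move: xy.
by case_arrow x y; case: (path2_cases p) => ->; expand_forms => source_y;
  rewrite ?source_y.
Qed.

Lemma sigma_e2_cases x y : x != y -> sigma (e2 x y x) = 0 \/ sigma (e2 x y x) = e2 x y x.
Proof.
move=> xy; rewrite sigma_e2_ract2 //; move: (nabla _) => n; move: xy.
case_arrow x y; [case: (F2_cases (n p010)) | case: (F2_cases (n p101))] => c;
  [left | right | left | right]; apply/ffunP => p;
  by case: (path2_cases p) => ->; expand_forms; rewrite ?c.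
Qed.

Lemma sigma0 : sigma 0 = 0.
Proof. by case: conn => _ _ _ _ /(_ 0 0) [+ _]; rewrite !lact2_0. Qed.

Lemma sigma_eq_id :
  sigma (e2 v0 v1 v0) = e2 v0 v1 v0 -> sigma (e2 v1 v0 v1) = e2 v1 v0 v1 -> sigma =1 id.
Proof.
case: conn => _ _ _ sigma_lin _ fix010 fix101 t.
have decomp :
    t = [ffun p => t p010 * e2 v0 v1 v0 p] + ([ffun p => t p101 * e2 v1 v0 v1 p] + 0).
  by apply/ffunP => p; case: (path2_cases p) => ->; expand_forms.
by rewrite {1}decomp !sigma_lin sigma0 fix010 fix101 -decomp.
Qed.

Lemma bimod_conn_eq_nabla_g :
    sigma (e2 v0 v1 v0) = e2 v0 v1 v0 -> sigma (e2 v1 v0 v1) = e2 v1 v0 v1 ->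
  [/\ nabla (e1 v0 v1) = gmet, nabla (e1 v1 v0) = gmet & sigma =1 id].
Proof.
move=> fix010 fix101; split; last exact: sigma_eq_id.
- by rewrite nabla_e1_split // fix010.
- by rewrite nabla_e1_split // fix101 addrC.
Qed.

Lemma bijective_sigma_e2 x y : bijective sigma -> x != y -> sigma (e2 x y x) = e2 x y x.
Proof.
move=> [tau sigmaK _] xy; case: (sigma_e2_cases xy) => // sigma_e2_0.
have e2_0 : e2 x y x = 0 by rewrite -[e2 x y x]sigmaK sigma_e2_0 -{1}sigma0 sigmaK.
by move: (e2_zigzag_neq0 xy); rewrite e2_0 eqxx.
Qed.

Lemma metric_compatible_sigma_e2 : metric_compatible nabla sigma ->
  sigma (e2 v0 v1 v0) = e2 v0 v1 v0 /\ sigma (e2 v1 v0 v1) = e2 v1 v0 v1.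
Proof.
move/ffunP/(_ q0101); rewrite sum_ffunE sum_path2 !ffunE /= !nabla_e1_split //.
rewrite !sum_path3 /=.
case: (@sigma_e2_cases v0 v1 isT) => ->; case: (@sigma_e2_cases v1 v0 isT) => ->;
  try by move=> _.
all: by expand_forms; move/eqP.
Qed.

End Uniqueness.

Theorem lemma4p1 :
  (* existence: nabla(01) = nabla(10) = g, sigma = id is a bimodule connection,
     metric compatible, torsion free and flat *)
  (exists nabla : Omega1 -> Omega2,
      [/\ nabla (e1 v0 v1) = gmet, nabla (e1 v1 v0) = gmet,
          is_bimod_conn nabla id & bijective (@id Omega2)]
      /\ [/\ metric_compatible nabla id,
             (forall w, torsion nabla w = 0) &
             (forall w, curvature nabla w = 0)])
  (* uniqueness among bimodule connections with invertible sigma *)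
  /\ (forall (nabla : Omega1 -> Omega2) (sigma : Omega2 -> Omega2),
        is_bimod_conn nabla sigma -> bijective sigma ->
        [/\ nabla (e1 v0 v1) = gmet, nabla (e1 v1 v0) = gmet & sigma =1 id])
  (* uniqueness among metric compatible bimodule connections *)
  /\ (forall (nabla : Omega1 -> Omega2) (sigma : Omega2 -> Omega2),
        is_bimod_conn nabla sigma -> metric_compatible nabla sigma ->
        [/\ nabla (e1 v0 v1) = gmet, nabla (e1 v1 v0) = gmet & sigma =1 id]).
Proof.
split; last split.
- exists nabla_g; split; split; rewrite ?nabla_g_e1 //.
  + exact: nabla_g_bimod_conn.
  + by exists id.
  + exact: nabla_g_metric_compatible.
  + exact: nabla_g_torsion_free.
  + exact: nabla_g_flat.
- move=> nabla sigma conn bij.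
  by apply: (bimod_conn_eq_nabla_g conn); apply: (bijective_sigma_e2 conn bij).
- move=> nabla sigma conn compat.
  have [fix010 fix101] := metric_compatible_sigma_e2 conn compat.
  exact: bimod_conn_eq_nabla_g.
Qed.
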